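(* Let a target $T$ be fixed at a point $(x_T,y_T)\in\mathbb{R}^2$, and consider a UAV with dynamics $\dot x=V\cos\psi$, $\dot y=V\sin\psi$, $\dot\psi=\omega$, $V>0$ constant. Let $r(t)$ be the distance from the UAV to $T$ and $\theta(t)\in[0,2\pi)$ the bearing angle. Equivalently, in these variables $\dot r=-V\cos\theta$, $\dot\theta=\omega+\frac{V\sin\theta}{r}$. Let the control input be $$\omega=\begin{cases} k\left[V\cos\!\left(\pi-\sin^{-1}\!\left(\frac{r_a}{r(t)}\right)\right)-\dot r(t)\right], & r(t)\ge r_a,\\ 0,&\text{otherwise},\end{cases}$$ with constants $k>0$ and $r_a\ge 0$. Suppose there is $t_0\ge 0$ such that $r(t_0)\ge r_a$ and $\theta(t_0)\in\left(\sin^{-1}\!\left(\frac{r_a}{r(t_0)}\right),\,2\pi-\sin^{-1}\!\left(\frac{r_a}{r(t_0)}\right)\right)$. Then $r(t)\ge r_a$ for all $t\ge t_0$.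
   Context: The bearing angle $\theta(t)\in[0,2\pi)$ is the angle measured counterclockwise from the vector pointing from the UAV's current position to $T$ to the UAV's current heading direction $(\cos\psi,\sin\psi)$. $\sin^{-1}$ is the principal arcsine. *)

From Stdlib Require Import Reals.
From Coquelicot Require Import Coquelicot.
Open Scope R_scope.

Definition dist_to_target (x y : R -> R) (xT yT : R) (t : R) : R :=
  sqrt ((x t - xT) ^ 2 + (y t - yT) ^ 2).

(* th is the bearing angle at time t: the angle in [0, 2*PI) measured
   counterclockwise from the vector u = T - p(t) (UAV -> target) to the heading
   direction h = (cos psi, sin psi); i.e. |u| cos th = u . h and
   |u| sin th = u x h (2-d cross product). *)
Definition is_bearing (x y psi : R -> R) (xT yT : R) (t th : R) : Prop :=
  0 <= th < 2 * PI /\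
  dist_to_target x y xT yT t * cos th
    = (xT - x t) * cos (psi t) + (yT - y t) * sin (psi t) /\
  dist_to_target x y xT yT t * sin th
    = (xT - x t) * sin (psi t) - (yT - y t) * cos (psi t).

Definition control (k V ra : R) (r : R -> R) (t : R) : R :=
  if Rle_dec ra (r t)
  then k * (V * cos (PI - asin (ra / r t)) - Derive r t)
  else 0.

(** Let [radial = r cos th], [lateral = - r sin th], let [tangent_len =
    sqrt (r^2 - ra^2)] be the length of the tangent segment from the UAV to the
    circle of radius [ra] around [T], and [margin = radial - tangent_len =
    r (cos th - cos (asin (ra / r)))], which is negative exactly under the
    bearing condition.  The guidance law reads [omega = k V margin / r], and one
    computes [margin' = margin (k V lateral / r + V / tangent_len)].  Hence
    [margin * exp (k V t)] has derivative
    [exp (k V t) margin (k V (lateral + r) / r + V / tangent_len)], which is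
    [<= 0] while [margin < 0] because [lateral >= - r]; so the margin stays
    negative.  The distance cannot drop below [ra]: where [r = ra] the tangent
    length vanishes, so [radial = margin < 0] and [r] is strictly increasing.
    As [tangent_len] is not differentiable at [r = ra], both facts are
    propagated together by real induction. *)

From Stdlib Require Import Reals Lra Classical.
From Coquelicot Require Import Coquelicot.
Open Scope R_scope.

Ltac simpl_R_ops :=
  simpl; unfold scal, mult, plus, minus, opp, zero; simpl;
  unfold mult, plus, minus, opp, zero; simpl.

Lemma is_derive_eq_val (f : R -> R) (u l l' : R) :
  is_derive f u l -> l = l' -> is_derive f u l'.
Proof. now intros H <-. Qed.

Lemma is_derive_continuity_pt (f : R -> R) (u l : R) :
  is_derive f u l -> continuity_pt f u.
Proof.
  intros H. apply derivable_continuous_pt.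
  exists l. now apply is_derive_Reals.
Qed.

Lemma le_sqrt_iff_pow2_le (a z : R) :
  0 <= a -> 0 <= z -> a <= sqrt z <-> a ^ 2 <= z.
Proof.
  intros Ha Hz. split.
  - intros H. rewrite <- (pow2_sqrt z Hz). nra.
  - intros H. rewrite <- (sqrt_pow2 a Ha). now apply sqrt_le_1_alt.
Qed.

Lemma continuity_pt_le_of_left (f : R -> R) (a t c : R) :
  a < t -> continuity_pt f t ->
  (forall u, a <= u < t -> f u <= c) -> f t <= c.
Proof.
  intros Hat Hc Hf. destruct (Rle_or_lt (f t) c) as [Hle | Hgt]; [exact Hle |].
  destruct (Hc (f t - c)) as [alp [Halp Hnear]]; [lra |].
  set (u := t - Rmin alp (t - a) / 2).
  assert (Hmin : 0 < Rmin alp (t - a) <= Rmin alp (t - a)).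
  { split; [apply Rmin_pos; lra | lra]. }
  pose proof (Rmin_l alp (t - a)). pose proof (Rmin_r alp (t - a)).
  assert (Hu : a <= u < t) by (unfold u; lra).
  assert (Hclose : Rabs (f u - f t) < f t - c).
  { apply Hnear. split; [split; [exact I | unfold u; lra] |].
    simpl; unfold R_dist; rewrite Rabs_left; unfold u; lra. }
  apply Rabs_def2 in Hclose. specialize (Hf u Hu). lra.
Qed.

Lemma continuity_pt_ge_of_left (f : R -> R) (a t c : R) :
  a < t -> continuity_pt f t ->
  (forall u, a <= u < t -> c <= f u) -> c <= f t.
Proof.
  intros Hat Hc Hf.
  enough (- f t <= - c) by lra.
  apply (continuity_pt_le_of_left (fun u => - f u) a t (- c) Hat).
  - now apply continuity_pt_opp.
  - intros u Hu. specialize (Hf u Hu). lra.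
Qed.

Lemma continuity_pt_pos_near (f : R -> R) (t : R) :
  continuity_pt f t -> 0 < f t ->
  exists d, 0 < d /\ forall u, Rabs (u - t) < d -> 0 < f u.
Proof.
  intros Hc Hpos.
  destruct (Hc (f t)) as [alp [Halp Hnear]]; [lra |].
  exists alp. split; [lra |]. intros u Hu.
  destruct (Req_dec u t) as [-> | Hne]; [lra |].
  assert (Hclose : Rabs (f u - f t) < f t).
  { apply Hnear. split; [split; [exact I | auto] | exact Hu]. }
  apply Rabs_def2 in Hclose. lra.
Qed.

Lemma is_derive_pos_incr_right (f : R -> R) (t l : R) :
  is_derive f t l -> 0 < l ->
  exists d, 0 < d /\ forall u, t < u < t + d -> f t < f u.
Proof.
  intros H Hl. apply is_derive_Reals in H.
  destruct (H (l / 2)) as [del Hdel]; [lra |].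
  exists del. split; [apply cond_pos |]. intros u Hu.
  specialize (Hdel (u - t)). replace (t + (u - t)) with u in Hdel by ring.
  assert (Hquot : Rabs ((f u - f t) / (u - t) - l) < l / 2).
  { apply Hdel; [lra | rewrite Rabs_right; lra]. }
  apply Rabs_def2 in Hquot.
  assert (0 < (f u - f t) / (u - t) * (u - t)) by (apply Rmult_lt_0_compat; lra).
  enough (f u - f t = (f u - f t) / (u - t) * (u - t)) by lra.
  field. lra.
Qed.

Lemma real_induction (P : R -> Prop) (a : R) :
  P a ->
  (forall t, a < t -> (forall u, a <= u < t -> P u) -> P t) ->
  (forall t, a <= t -> (forall u, a <= u <= t -> P u) ->
     exists d, 0 < d /\ forall u, t <= u < t + d -> P u) ->
  forall t, a <= t -> P t.
Proof.
  intros Pa Hleft Hright t Hat.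
  set (S := fun w => a <= w <= t /\ forall v, a <= v <= w -> P v).
  assert (Sa : S a).
  { split; [lra |]. intros v Hv. now replace v with a by lra. }
  destruct (completeness S) as [m [Hub Hlub]].
  { exists t. intros w [Hw _]. lra. }
  { now exists a. }
  assert (Ham : a <= m) by now apply Hub.
  assert (Hmt : m <= t) by (apply Hlub; intros w [Hw _]; lra).
  assert (Pbelow : forall u, a <= u < m -> P u).
  { intros u Hu. destruct (classic (exists w, S w /\ u < w)) as [[w [[_ Pw] Huw]] | Hn].
    - apply Pw. lra.
    - assert (m <= u); [| lra]. apply Hlub. intros w Sw.
      destruct (Rle_or_lt w u) as [Hwu | Huw]; [exact Hwu |].
      exfalso. eauto. }
  assert (Pupto : forall u, a <= u <= m -> P u).
  { intros u Hu. destruct (Rle_lt_or_eq_dec u m) as [Hlt | ->]; [lra | apply Pbelow; lra |].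
    destruct (Rle_lt_or_eq_dec a m Ham) as [Hlt | <-]; [| exact Pa].
    now apply Hleft. }
  destruct (Rle_lt_or_eq_dec m t Hmt) as [Hlt | ->]; [| apply Pupto; lra].
  exfalso. destruct (Hright m Ham Pupto) as [d [Hd Pright]].
  pose proof (Rmin_l (m + d / 2) t). pose proof (Rmin_r (m + d / 2) t).
  set (w := Rmin (m + d / 2) t) in *.
  assert (Hmw : m < w) by (apply Rmin_glb_lt; lra).
  assert (S w).
  { split; [lra |]. intros v Hv. destruct (Rle_or_lt v m).
    - apply Pupto. lra.
    - apply Pright. lra. }
  assert (w <= m) by now apply Hub. lra.
Qed.

Lemma div_in_unit_interval (a r : R) : 0 <= a <= r -> 0 < r -> 0 <= a / r <= 1.
Proof.
  intros Ha Hr. split; [apply Rdiv_le_0_compat; lra |].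
  apply Rmult_le_reg_r with r; [lra |]. unfold Rdiv. rewrite Rmult_assoc, Rinv_l; lra.
Qed.

Lemma mul_cos_asin_div (a r : R) :
  0 <= a <= r -> 0 < r -> r * cos (asin (a / r)) = sqrt (r ^ 2 - a ^ 2).
Proof.
  intros Ha Hr. pose proof (div_in_unit_interval a r Ha Hr).
  rewrite cos_asin by lra.
  rewrite <- (sqrt_pow2 r) at 1 by lra. rewrite <- sqrt_mult by (unfold Rsqr; nra).
  f_equal. unfold Rsqr. field. lra.
Qed.

Lemma cos_lt_cos_asin (z th : R) :
  0 <= z <= 1 -> asin z < th < 2 * PI - asin z -> cos th < cos (asin z).
Proof.
  intros Hz Hth.
  pose proof (asin_bound z) as Hbound. pose proof PI_RGT_0.
  assert (Hasin : 0 <= asin z).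
  { destruct (Rle_or_lt 0 (asin z)) as [Hnonneg | Hneg]; [exact Hnonneg |].
    assert (sin (asin z) < 0) by (apply sin_lt_0_var; lra).
    rewrite sin_asin in * by lra. lra. }
  destruct (Rle_or_lt th PI).
  - apply cos_decreasing_1; lra.
  - replace (cos th) with (cos (2 * PI - th))
      by (rewrite cos_minus, cos_2PI, sin_2PI; ring).
    apply cos_decreasing_1; lra.
Qed.

Section Pursuit.

Variables (xT yT V k ra : R) (x y psi : R -> R).
Hypotheses (V_pos : 0 < V) (k_pos : 0 < k) (ra_pos : 0 < ra).

Let r := dist_to_target x y xT yT.
Let omega := control k V ra r.

Hypothesis dynamics : forall t, 0 <= t ->
  is_derive x t (V * cos (psi t)) /\
  is_derive y t (V * sin (psi t)) /\
  is_derive psi t (omega t).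

Definition sqdist (u : R) : R := (x u - xT) ^ 2 + (y u - yT) ^ 2.

Definition radial (u : R) : R :=
  (xT - x u) * cos (psi u) + (yT - y u) * sin (psi u).
Definition lateral (u : R) : R :=
  (yT - y u) * cos (psi u) - (xT - x u) * sin (psi u).
Definition tangent_len (u : R) : R := sqrt (sqdist u - ra ^ 2).
Definition margin (u : R) : R := radial u - tangent_len u.
Definition weighted_margin (u : R) : R := margin u * exp (k * V * u).

Lemma sqdist_nonneg (u : R) : 0 <= sqdist u.
Proof.
  unfold sqdist. pose proof (pow2_ge_0 (x u - xT)). pose proof (pow2_ge_0 (y u - yT)). lra.
Qed.

Lemma dist_eq_sqrt_sqdist (u : R) : r u = sqrt (sqdist u).
Proof. reflexivity. Qed.

Lemma dist_sq (u : R) : r u ^ 2 = sqdist u.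
Proof. apply pow2_sqrt, sqdist_nonneg. Qed.

Lemma dist_pos (u : R) : 0 < sqdist u -> 0 < r u.
Proof. apply sqrt_lt_R0. Qed.

Lemma lateral_sq_add_radial_sq (u : R) : lateral u ^ 2 + radial u ^ 2 = sqdist u.
Proof.
  pose proof (sin2_cos2 (psi u)) as Hpyth. unfold Rsqr in Hpyth.
  unfold lateral, radial, sqdist.
  transitivity (((xT - x u) ^ 2 + (yT - y u) ^ 2)
                * (sin (psi u) * sin (psi u) + cos (psi u) * cos (psi u))); [ring |].
  rewrite Hpyth. ring.
Qed.

Lemma is_derive_sqdist (u : R) : 0 <= u -> is_derive sqdist u (-2 * V * radial u).
Proof.
  intros Hu. destruct (dynamics u Hu) as [Hx [Hy _]].
  pose proof (is_derive_pow _ 2 u _ (is_derive_minus _ _ u _ _ Hx (is_derive_const xT u))) as Hx2.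
  pose proof (is_derive_pow _ 2 u _ (is_derive_minus _ _ u _ _ Hy (is_derive_const yT u))) as Hy2.
  apply (is_derive_eq_val _ _ _ _ (is_derive_plus _ _ _ _ _ Hx2 Hy2)).
  unfold radial. simpl_R_ops. ring.
Qed.

Lemma is_derive_radial (u : R) : 0 <= u -> is_derive radial u (- V + omega u * lateral u).
Proof.
  intros Hu. destruct (dynamics u Hu) as [Hx [Hy Hpsi]].
  pose proof (is_derive_mult _ _ u _ _ (is_derive_minus _ _ u _ _ (is_derive_const xT u) Hx)
    (is_derive_comp cos psi u _ _ (is_derive_cos (psi u)) Hpsi) Rmult_comm) as Hcos.
  pose proof (is_derive_mult _ _ u _ _ (is_derive_minus _ _ u _ _ (is_derive_const yT u) Hy)
    (is_derive_comp sin psi u _ _ (is_derive_sin (psi u)) Hpsi) Rmult_comm) as Hsin.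
  apply (is_derive_eq_val _ _ _ _ (is_derive_plus _ _ _ _ _ Hcos Hsin)).
  pose proof (sin2_cos2 (psi u)) as Hpyth. unfold Rsqr in Hpyth.
  unfold lateral. simpl_R_ops.
  transitivity (- V * (sin (psi u) * sin (psi u) + cos (psi u) * cos (psi u))
                + omega u * ((yT - y u) * cos (psi u) - (xT - x u) * sin (psi u))); [ring |].
  rewrite Hpyth. ring.
Qed.

Lemma is_derive_dist (u : R) : 0 <= u -> 0 < sqdist u -> is_derive r u (- V * radial u / r u).
Proof.
  intros Hu Hq.
  apply (is_derive_eq_val _ _ _ _ (is_derive_sqrt sqdist u _ (is_derive_sqdist u Hu) Hq)).
  pose proof (dist_pos u Hq). rewrite dist_eq_sqrt_sqdist in *. field. lra.
Qed.

Lemma is_derive_tangent_len (u : R) : 0 <= u -> ra ^ 2 < sqdist u ->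
  is_derive tangent_len u (- V * radial u / tangent_len u).
Proof.
  intros Hu Hq.
  assert (Htan : 0 < tangent_len u) by (apply sqrt_lt_R0; lra).
  pose proof (is_derive_minus _ _ u _ _ (is_derive_sqdist u Hu) (is_derive_const (ra ^ 2) u))
    as Hdiff.
  apply (is_derive_eq_val _ _ _ _ (is_derive_sqrt _ u _ Hdiff ltac:(simpl_R_ops; lra))).
  unfold tangent_len in *. simpl_R_ops.
  replace (ra * (ra * 1)) with (ra ^ 2) by ring.
  unfold Rminus in *. field. lra.
Qed.

(* [cos (PI - asin (ra / r)) = - tangent_len / r] and [r' = - V radial / r]. *)
Lemma control_eq_margin (u : R) : 0 <= u -> ra ^ 2 < sqdist u ->
  omega u = k * V * margin u / r u.
Proof.
  intros Hu Hq.
  assert (Hr : ra <= r u).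
  { rewrite dist_eq_sqrt_sqdist. apply le_sqrt_iff_pow2_le; [lra | apply sqdist_nonneg | lra]. }
  pose proof (dist_pos u ltac:(nra)) as Hrpos.
  unfold omega, control. destruct (Rle_dec ra (r u)) as [_ | Hn]; [| contradiction].
  rewrite (is_derive_unique r u _ (is_derive_dist u Hu ltac:(nra))).
  rewrite Rtrigo_facts.cos_pi_minus.
  replace (cos (asin (ra / r u))) with (r u * cos (asin (ra / r u)) / r u) by (field; lra).
  rewrite mul_cos_asin_div, dist_sq by lra.
  unfold margin, tangent_len. field. lra.
Qed.

Lemma is_derive_margin (u : R) : 0 <= u -> ra ^ 2 < sqdist u ->
  is_derive margin u (margin u * (k * V * lateral u / r u + V / tangent_len u)).
Proof.
  intros Hu Hq.
  apply (is_derive_eq_val _ _ _ _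
    (is_derive_minus _ _ u _ _ (is_derive_radial u Hu) (is_derive_tangent_len u Hu Hq))).
  assert (0 < tangent_len u) by (apply sqrt_lt_R0; lra).
  pose proof (dist_pos u ltac:(nra)).
  rewrite (control_eq_margin u Hu Hq). unfold margin. simpl_R_ops. field. lra.
Qed.

Definition weighted_margin_rate (u : R) : R :=
  exp (k * V * u) * margin u * (k * V * lateral u / r u + V / tangent_len u + k * V).

Lemma is_derive_weighted_margin (u : R) : 0 <= u -> ra ^ 2 < sqdist u ->
  is_derive weighted_margin u (weighted_margin_rate u).
Proof.
  intros Hu Hq.
  assert (Hexp : is_derive (fun t => exp (k * V * t)) u (k * V * exp (k * V * u)))
    by (auto_derive; [easy | ring]).
  apply (is_derive_eq_val _ _ _ _
    (is_derive_mult _ _ u _ _ (is_derive_margin u Hu Hq) Hexp Rmult_comm)).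
  unfold weighted_margin_rate. simpl_R_ops. ring.
Qed.

(* [V / tangent_len u] is [0] when [tangent_len u = 0]; the sign is unaffected. *)
Lemma weighted_margin_rate_nonpos (u : R) : 0 < sqdist u -> margin u < 0 ->
  weighted_margin_rate u <= 0.
Proof.
  intros Hq Hm. pose proof (dist_pos u Hq) as Hr.
  assert (Hlat : - r u <= lateral u).
  { pose proof (dist_sq u). pose proof (lateral_sq_add_radial_sq u). nra. }
  assert (Hcone : 0 <= k * V * lateral u / r u + k * V).
  { replace (k * V * lateral u / r u + k * V) with (k * V * (lateral u + r u) / r u)
      by (field; lra).
    apply Rle_mult_inv_pos; [| exact Hr]. apply Rmult_le_pos; nra. }
  assert (Htan : 0 <= V / tangent_len u).
  { destruct (Req_dec (tangent_len u) 0) as [-> | Hne].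
    - unfold Rdiv. rewrite Rinv_0. lra.
    - apply Rle_mult_inv_pos; [lra |]. pose proof (sqrt_pos (sqdist u - ra ^ 2)).
      unfold tangent_len in *. lra. }
  pose proof (exp_pos (k * V * u)).
  unfold weighted_margin_rate. rewrite Rmult_assoc.
  apply Rmult_le_0_l; [lra |]. nra.
Qed.

Lemma continuity_pt_sqdist (u : R) : 0 <= u -> continuity_pt sqdist u.
Proof. intros Hu. exact (is_derive_continuity_pt _ _ _ (is_derive_sqdist u Hu)). Qed.

Lemma continuity_pt_weighted_margin (u : R) : 0 <= u -> ra ^ 2 <= sqdist u ->
  continuity_pt weighted_margin u.
Proof.
  intros Hu Hq. apply continuity_pt_mult.
  - apply continuity_pt_minus.
    + exact (is_derive_continuity_pt _ _ _ (is_derive_radial u Hu)).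
    + apply (continuity_pt_comp (fun t => sqdist t - ra ^ 2) sqrt).
      * apply continuity_pt_minus; [now apply continuity_pt_sqdist |].
        now apply continuity_pt_const.
      * apply continuity_pt_sqrt. lra.
  - apply (is_derive_continuity_pt _ _ (k * V * exp (k * V * u))).
    auto_derive; [easy | ring].
Qed.

Lemma weighted_margin_neg_iff (u : R) : weighted_margin u < 0 <-> margin u < 0.
Proof.
  pose proof (exp_pos (k * V * u)). unfold weighted_margin.
  split; intros Hneg; [destruct (Rlt_or_le (margin u) 0) |]; nra.
Qed.

Lemma weighted_margin_nonincr (t1 u : R) : 0 <= t1 < u ->
  ra ^ 2 <= sqdist t1 -> (forall z, t1 < z <= u -> ra ^ 2 < sqdist z) ->
  (forall z, t1 <= z <= u -> margin z < 0) ->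
  weighted_margin u <= weighted_margin t1.
Proof.
  intros Hu Hq1 Hq Hm.
  destruct (MVT_gen weighted_margin t1 u weighted_margin_rate) as [c [Hc Hmvt]];
    cbv zeta in *; rewrite ?Rmin_left, ?Rmax_right in * by lra.
  - intros z Hz. apply is_derive_weighted_margin; [lra | apply Hq; lra].
  - intros z Hz. apply continuity_pt_weighted_margin; [lra |].
    destruct (Req_dec z t1) as [-> | Hne]; [exact Hq1 | left; apply Hq; lra].
  - assert (weighted_margin_rate c <= 0).
    { apply weighted_margin_rate_nonpos; [| apply Hm; lra].
      destruct (Req_dec c t1) as [-> | Hne]; [nra |].
      enough (ra ^ 2 < sqdist c) by nra. apply Hq. lra. }
    nra.
Qed.

(* At [sqdist = ra ^ 2] the tangent length vanishes, so [radial = margin < 0]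
   and the distance strictly increases. *)
Lemma sqdist_gt_radius_right (t1 : R) : 0 <= t1 -> ra ^ 2 <= sqdist t1 -> margin t1 < 0 ->
  exists d, 0 < d /\ forall u, t1 < u < t1 + d -> ra ^ 2 < sqdist u.
Proof.
  intros Ht1 Hq1 Hm1.
  destruct (Rle_lt_or_eq_dec _ _ Hq1) as [Hlt | Heq].
  - destruct (continuity_pt_pos_near (fun u => sqdist u - ra ^ 2) t1) as [d [Hd Hnear]].
    + apply continuity_pt_minus; [now apply continuity_pt_sqdist | now apply continuity_pt_const].
    + lra.
    + exists d. split; [exact Hd |]. intros u Hu.
      enough (0 < sqdist u - ra ^ 2) by lra.
      apply Hnear. rewrite Rabs_right; lra.
  - assert (Htan : tangent_len t1 = 0).
    { unfold tangent_len. rewrite <- Heq, Rminus_diag. apply sqrt_0. }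
    unfold margin in Hm1.
    destruct (is_derive_pos_incr_right sqdist t1 _ (is_derive_sqdist t1 Ht1)) as [d [Hd Hincr]];
      [nra |].
    exists d. split; [exact Hd |]. intros u Hu. specialize (Hincr u Hu). lra.
Qed.

Definition pursuit_invariant (t0 u : R) : Prop :=
  ra ^ 2 <= sqdist u /\ weighted_margin u <= weighted_margin t0.

Lemma invariant_of_left (t0 t1 : R) : 0 <= t0 < t1 ->
  (forall u, t0 <= u < t1 -> pursuit_invariant t0 u) -> pursuit_invariant t0 t1.
Proof.
  intros Ht Hinv.
  assert (Hq1 : ra ^ 2 <= sqdist t1).
  { apply (continuity_pt_ge_of_left sqdist t0); [lra | apply continuity_pt_sqdist; lra |].
    intros u Hu. apply (Hinv u Hu). }
  split; [exact Hq1 |].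
  apply (continuity_pt_le_of_left weighted_margin t0);
    [lra | apply continuity_pt_weighted_margin; lra |].
  intros u Hu. apply (Hinv u Hu).
Qed.

Lemma invariant_extends_right (t0 t1 : R) : 0 <= t0 <= t1 -> margin t0 < 0 ->
  (forall u, t0 <= u <= t1 -> pursuit_invariant t0 u) ->
  exists d, 0 < d /\ forall u, t1 <= u < t1 + d -> pursuit_invariant t0 u.
Proof.
  intros Ht Hm0 Hinv.
  destruct (Hinv t1 ltac:(lra)) as [Hq1 Hw1].
  assert (Hm1 : margin t1 < 0).
  { apply weighted_margin_neg_iff. apply weighted_margin_neg_iff in Hm0. lra. }
  destruct (sqdist_gt_radius_right t1 ltac:(lra) Hq1 Hm1) as [d1 [Hd1 Hq]].
  destruct (continuity_pt_pos_near (fun u => - weighted_margin u) t1) as [d2 [Hd2 Hneg]].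
  { apply continuity_pt_opp, continuity_pt_weighted_margin; lra. }
  { enough (weighted_margin t1 < 0) by lra. now apply weighted_margin_neg_iff. }
  exists (Rmin d1 d2). split; [now apply Rmin_pos |].
  pose proof (Rmin_l d1 d2). pose proof (Rmin_r d1 d2).
  intros u Hu. destruct (Req_dec u t1) as [-> | Hne]; [now split |].
  split; [left; apply Hq; lra |].
  apply (Rle_trans _ (weighted_margin t1)); [| exact Hw1].
  apply weighted_margin_nonincr; [lra | exact Hq1 | intros z Hz; apply Hq; lra |].
  intros z Hz. apply weighted_margin_neg_iff.
  enough (0 < - weighted_margin z) by lra.
  apply Hneg. apply Rabs_def1; lra.
Qed.

Lemma sqdist_ge_radius (t0 : R) : 0 <= t0 -> ra ^ 2 <= sqdist t0 -> margin t0 < 0 ->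
  forall t, t0 <= t -> ra ^ 2 <= sqdist t.
Proof.
  intros Ht0 Hq0 Hm0 t Ht.
  refine (proj1 (real_induction (pursuit_invariant t0) t0 _ _ _ t Ht)).
  - split; [exact Hq0 | lra].
  - intros t1 Ht1. apply invariant_of_left. lra.
  - intros t1 Ht1. apply invariant_extends_right; [lra | exact Hm0].
Qed.

Lemma margin_neg_of_bearing (t0 th0 : R) : ra <= r t0 ->
  is_bearing x y psi xT yT t0 th0 ->
  asin (ra / r t0) < th0 < 2 * PI - asin (ra / r t0) ->
  margin t0 < 0.
Proof.
  intros Hr [_ [Hcos _]] Hth.
  assert (Hdiv : 0 <= ra / r t0 <= 1) by (apply div_in_unit_interval; lra).
  pose proof (cos_lt_cos_asin _ _ Hdiv Hth) as Hlt.
  assert (Htan : tangent_len t0 = r t0 * cos (asin (ra / r t0))).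
  { now rewrite mul_cos_asin_div, dist_sq by lra. }
  unfold margin, radial. rewrite <- Hcos, Htan. fold r.
  assert (0 < r t0) by lra. nra.
Qed.

End Pursuit.

Theorem lemma2 (xT yT V k ra t0 : R) (x y psi : R -> R) :
  0 < V -> 0 < k -> 0 <= ra ->
  (forall t, 0 <= t ->
     is_derive x t (V * cos (psi t)) /\
     is_derive y t (V * sin (psi t)) /\
     is_derive psi t (control k V ra (dist_to_target x y xT yT) t)) ->
  0 <= t0 ->
  ra <= dist_to_target x y xT yT t0 ->
  (exists th0, is_bearing x y psi xT yT t0 th0 /\
     asin (ra / dist_to_target x y xT yT t0) < th0 /\
     th0 < 2 * PI - asin (ra / dist_to_target x y xT yT t0)) ->
  forall t, t0 <= t -> ra <= dist_to_target x y xT yT t.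
Proof.
  intros HV Hk Hra Hdyn Ht0 Hr0 [th0 [Hbearing Hth]] t Ht.
  destruct (Rle_lt_or_eq_dec 0 ra Hra) as [Hra_pos | <-]; [| apply sqrt_pos].
  assert (Hsq0 : ra ^ 2 <= sqdist xT yT x y t0)
    by (apply le_sqrt_iff_pow2_le; [lra | apply sqdist_nonneg | exact Hr0]).
  pose proof (margin_neg_of_bearing xT yT ra x y psi Hra_pos t0 th0 Hr0 Hbearing Hth) as Hm0.
  apply le_sqrt_iff_pow2_le; [lra | apply sqdist_nonneg |].
  exact (sqdist_ge_radius xT yT V k ra x y psi HV Hk Hra_pos Hdyn t0 Ht0 Hsq0 Hm0 t Ht).
Qed.
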